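(* Let $(P,\le,\mu,\gamma)$ be a preordered heap and let $\tau\colon P\times P\to P$ be its target multiplication, $\tau(a,b)=\gamma(\mu(\gamma a,\gamma b))$. Then for every $a\in P$: (i) $(\mu_a,\tau^{\gamma a})$ is an adjoint pair, i.e. for all $b,c\in P$: $\mu(a,b)\le c$ if and only if $b\le \tau(c,\gamma a)$; (ii) $(\mu^a,\tau_{\gamma a})$ is an adjoint pair, i.e. for all $b,c\in P$: $\mu(b,a)\le c$ if and only if $b\le \tau(\gamma a,c)$.
   Context: A preordered heap is a structure $(P,\le,\mu,\gamma)$ where $(P,\le)$ is a preorder (reflexive and transitive relation); $\mu\colon P\times P\to P$ (source multiplication) is monotonic in both arguments; $\gamma\colon P\to P$ (involution) is antitone ($a\le b\Rightarrow \gamma b\le\gamma a$); and the following axioms hold: (A1) $\gamma(\gamma(a))=a$ for all $a$; (A2a, left regularity) $\mu(a,\gamma(\mu(\gamma b,a)))\le b$ for all $a,b\in P$; (A2b, right regularity) $\mu(\gamma(\mu(a,\gamma b)),a)\le b$ for all $a,b\in P$. For a binary operation $\nu$ and $a\in P$, write $\nu_a(b)=\nu(a,b)$ (left multiplication by $a$) and $\nu^a(b)=\nu(b,a)$ (right multiplication by $a$). Monotone maps $L,R\colon P\to P$ form an adjoint pair $(L,R)$ if $Lb\le c \iff b\le Rc$ for all $b,c$. *)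

Record PreorderedHeap (P : Type) := {
  le : P -> P -> Prop;
  mu : P -> P -> P;
  gamma : P -> P;
  le_refl : forall a, le a a;
  le_trans : forall a b c, le a b -> le b c -> le a c;
  mu_mono : forall a a' b b', le a a' -> le b b' -> le (mu a b) (mu a' b');
  gamma_antitone : forall a b, le a b -> le (gamma b) (gamma a);
  gamma_invol : forall a, gamma (gamma a) = a;
  left_regular : forall a b, le (mu a (gamma (mu (gamma b) a))) b;
  right_regular : forall a b, le (mu (gamma (mu a (gamma b))) a) b
}.

Arguments le {P} _ _ _.
Arguments mu {P} _ _ _.
Arguments gamma {P} _ _.

Definition tau {P : Type} (H : PreorderedHeap P) (a b : P) : P :=
  gamma H (mu H (gamma H a) (gamma H b)).

Definition adjoint_pair {P : Type} (H : PreorderedHeap P) (L R : P -> P) : Prop :=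
  (forall x y, le H x y -> le H (L x) (L y)) /\
  (forall x y, le H x y -> le H (R x) (R y)) /\
  (forall b c, le H (L b) c <-> le H b (R c)).


(* Both equivalences come from the regularity axioms: left regularity
   [mu a (gamma (mu (gamma c) a)) <= c] is the counit of the first adjunction,
   and right regularity, transported through the antitone involution gamma,
   is its unit (symmetrically for the second adjunction). *)

Section PreorderedHeapAdjunctions.

Variables (P : Type) (H : PreorderedHeap P).

Lemma mu_monol (a a' b : P) : le H a a' -> le H (mu H a b) (mu H a' b).
Proof. intro Ha; apply (mu_mono _ H); [exact Ha | apply (le_refl _ H)]. Qed.

Lemma mu_monor (a b b' : P) : le H b b' -> le H (mu H a b) (mu H a b').
Proof. intro Hb; apply (mu_mono _ H); [apply (le_refl _ H) | exact Hb]. Qed.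

Lemma tau_mono (a a' b b' : P) :
  le H a a' -> le H b b' -> le H (tau H a b) (tau H a' b').
Proof.
  intros Ha Hb; unfold tau.
  apply (gamma_antitone _ H), (mu_mono _ H); apply (gamma_antitone _ H);
    assumption.
Qed.

Lemma le_gamma_swap (x y : P) : le H x (gamma H y) -> le H y (gamma H x).
Proof.
  intro Hxy; pose proof (gamma_antitone _ H _ _ Hxy) as Hyx.
  rewrite (gamma_invol _ H y) in Hyx; exact Hyx.
Qed.

Lemma tau_gammar (a c : P) : tau H c (gamma H a) = gamma H (mu H (gamma H c) a).
Proof. unfold tau; now rewrite (gamma_invol _ H a). Qed.

Lemma tau_gammal (a c : P) : tau H (gamma H a) c = gamma H (mu H a (gamma H c)).
Proof. unfold tau; now rewrite (gamma_invol _ H a). Qed.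

Lemma mu_left_adjoint (a b c : P) :
  le H (mu H a b) c <-> le H b (tau H c (gamma H a)).
Proof.
  rewrite tau_gammar; split; intro Hbc.
  - apply le_gamma_swap.
    apply (le_trans _ H) with (mu H (gamma H (mu H a b)) a).
    + apply mu_monol, (gamma_antitone _ H), Hbc.
    + pose proof (right_regular _ H a (gamma H b)) as Hreg.
      rewrite (gamma_invol _ H b) in Hreg; exact Hreg.
  - apply (le_trans _ H) with (mu H a (gamma H (mu H (gamma H c) a))).
    + apply mu_monor, Hbc.
    + apply (left_regular _ H).
Qed.

Lemma mu_right_adjoint (a b c : P) :
  le H (mu H b a) c <-> le H b (tau H (gamma H a) c).
Proof.
  rewrite tau_gammal; split; intro Hbc.
  - apply le_gamma_swap.
    apply (le_trans _ H) with (mu H a (gamma H (mu H b a))).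
    + apply mu_monor, (gamma_antitone _ H), Hbc.
    + pose proof (left_regular _ H a (gamma H b)) as Hreg.
      rewrite (gamma_invol _ H b) in Hreg; exact Hreg.
  - apply (le_trans _ H) with (mu H (gamma H (mu H a (gamma H c))) a).
    + apply mu_monol, Hbc.
    + apply (right_regular _ H).
Qed.

End PreorderedHeapAdjunctions.

Theorem theorem1 (P : Type) (H : PreorderedHeap P) (a : P) :
  adjoint_pair H (fun b => mu H a b) (fun c => tau H c (gamma H a)) /\
  adjoint_pair H (fun b => mu H b a) (fun c => tau H (gamma H a) c).
Proof.
  split; repeat split.
  - intros x y; apply mu_monor.
  - intros x y Hxy; apply tau_mono; [exact Hxy | apply (le_refl _ H)].
  - apply mu_left_adjoint.
  - apply mu_left_adjoint.
  - intros x y; apply mu_monol.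
  - intros x y Hxy; apply tau_mono; [apply (le_refl _ H) | exact Hxy].
  - apply mu_right_adjoint.
  - apply mu_right_adjoint.
Qed.
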